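(* For any $1\le\beta\le m$ and any $x\in\mathbb{R}^n$, $\mathbb{E}_{\mathbb{S}}[a_{i^*}a_{i^*}^T]\preceq\frac{\beta}{m}A^TA$ (in the positive semidefinite order).
   Context: $A\in\mathbb{R}^{m\times n}$ has rows $a_1^T,\dots,a_m^T$ with $\|a_i\|_2=1$, and $b\in\mathbb{R}^m$; $t^+=\max\{t,0\}$. Sampling distribution $\mathbb{S}$ at $x$ (with sample size $\beta$): choose $\tau\subseteq\{1,\dots,m\}$ with $|\tau|=\beta$ uniformly at random among all $\binom m\beta$ subsets and let $i^*\in\tau$ be an index maximizing $(a_i^Tx-b_i)^+$ over $i\in\tau$; $\mathbb{E}_{\mathbb{S}}$ is expectation over $\tau$. *)

From mathcomp Require Import all_boot all_order all_algebra.
Set Implicit Arguments. Unset Strict Implicit. Unset Printing Implicit Defensive.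
Import Order.TTheory GRing.Theory Num.Theory.
Local Open Scope ring_scope.

Section Defs.
Variables (R : realFieldType) (m n : nat).

Definition pos_part (t : R) : R := Num.max t 0.

Definition residual (A : 'M[R]_(m, n)) (b : 'cV[R]_m) (x : 'cV[R]_n) (i : 'I_m) : R :=
  pos_part ((A *m x) i 0 - b i 0).

(* sel picks, for every beta-subset tau, an index i* in tau maximizing the residual
   over tau (any tie-breaking rule is allowed) *)
Definition greedy_selection (A : 'M[R]_(m, n)) (b : 'cV[R]_m) (x : 'cV[R]_n)
  (beta : nat) (sel : {set 'I_m} -> 'I_m) : Prop :=
  forall tau : {set 'I_m}, #|tau| = beta ->
    sel tau \in tau /\ (forall j, j \in tau -> residual A b x j <= residual A b x (sel tau)).

(* E_S[a_{i*} a_{i*}^T], tau uniform over all binom(m,beta) subsets of size beta *)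
Definition ES_outer (A : 'M[R]_(m, n)) (beta : nat) (sel : {set 'I_m} -> 'I_m) : 'M[R]_n :=
  ('C(m, beta))%:R^-1 *:
    \sum_(tau : {set 'I_m} | #|tau| == beta) ((row (sel tau) A)^T *m row (sel tau) A).

End Defs.

Definition loewner_le (R : realFieldType) (k : nat) (B C : 'M[R]_k) : Prop :=
  forall v : 'cV[R]_k, 0 <= (v^T *m (C - B) *m v) 0 0.

(* Only [sel tau \in tau] is used: for any such selection rule the sum of
   [(a_(sel tau)^T v)^2] over the beta-subsets [tau] is at most the sum of
   [\sum_(i in tau) (a_i^T v)^2], and each [i] lies in exactly
   ['C(m-1, beta-1)] of them.  Dividing by ['C(m, beta)] gives [beta / m]. *)
From mathcomp Require Import all_boot all_order all_algebra.
Set Implicit Arguments. Unset Strict Implicit. Unset Printing Implicit Defensive.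
Import Order.TTheory GRing.Theory Num.Theory.
Local Open Scope ring_scope.

Section QuadraticForm.
Variables (R : comPzRingType) (n : nat).

Definition qform (v : 'cV[R]_n) (M : 'M[R]_n) : R := (v^T *m M *m v) 0 0.

Lemma qformB v (M N : 'M[R]_n) : qform v (M - N) = qform v M - qform v N.
Proof. by rewrite /qform mulmxBr mulmxBl !mxE. Qed.

Lemma qformZ v (c : R) (M : 'M[R]_n) : qform v (c *: M) = c * qform v M.
Proof. by rewrite /qform -scalemxAr -scalemxAl mxE. Qed.

Lemma qform_sum (I : finType) (P : pred I) v (M : I -> 'M[R]_n) :
  qform v (\sum_(i | P i) M i) = \sum_(i | P i) qform v (M i).
Proof. by rewrite /qform mulmx_sumr mulmx_suml summxE. Qed.

Lemma qform_gram k v (M : 'M[R]_(k, n)) :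
  qform v (M^T *m M) = \sum_(j < k) ((M *m v) j 0) ^+ 2.
Proof.
rewrite /qform mulmxA -trmx_mul -mulmxA mxE.
by apply: eq_bigr => j _; rewrite mxE expr2.
Qed.

Lemma qform_row_gram m v (A : 'M[R]_(m, n)) (i : 'I_m) :
  qform v ((row i A)^T *m row i A) = ((A *m v) i 0) ^+ 2.
Proof. by rewrite qform_gram big_ord1 -row_mul mxE. Qed.

End QuadraticForm.

Lemma loewner_le_qform (R : realFieldType) (n : nat) (B C : 'M[R]_n) :
  (forall v, qform v B <= qform v C) -> loewner_le B C.
Proof. by move=> BC v; rewrite -/(qform v _) qformB subr_ge0. Qed.

Section SubsetCounting.
Variable T : finType.

Lemma card_subsets_mem (i : T) (k : nat) :
  #|[set tau : {set T} | (#|tau| == k.+1) && (i \in tau)]| = 'C(#|T|.-1, k).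
Proof.
have T_gt0 : (0 < #|T|)%N by apply/card_gt0P; exists i.
have splitT := cardsID [set tau : {set T} | i \in tau]
                       [set tau : {set T} | #|tau| == k.+1].
have off_i : [set tau : {set T} | #|tau| == k.+1] :\: [set tau : {set T} | i \in tau]
          = [set tau : {set T} | tau \subset [set~ i] & #|tau| == k.+1].
  by apply/setP => tau; rewrite !inE subsetC sub1set inE andbC.
have on_i : [set tau : {set T} | #|tau| == k.+1] :&: [set tau : {set T} | i \in tau]
          = [set tau : {set T} | (#|tau| == k.+1) && (i \in tau)].
  by apply/setP => tau; rewrite !inE.
move: splitT; rewrite off_i on_i cards_draws card_draws cardsC1.
by case: #|T| T_gt0 => [|N] //= _; rewrite binS addnC => /addnI.
Qed.

Lemma sum_subsets_sum (V : nmodType) (k : nat) (F : T -> V) :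
  \sum_(tau : {set T} | #|tau| == k.+1) \sum_(i in tau) F i
  = (\sum_i F i) *+ 'C(#|T|.-1, k).
Proof.
under eq_bigr do rewrite big_mkcond.
rewrite exchange_big -sumrMnl; apply: eq_bigr => i _.
rewrite -big_mkcondr sumr_const -(card_subsets_mem i).
by congr (_ *+ _); apply: eq_card => tau; rewrite !inE.
Qed.

Lemma sum_subsets_choice_le (R : numDomainType) (k : nat) (F : T -> R)
    (sel : {set T} -> T) :
  (forall i, 0 <= F i) -> (forall tau : {set T}, #|tau| = k.+1 -> sel tau \in tau) ->
  \sum_(tau : {set T} | #|tau| == k.+1) F (sel tau) <= (\sum_i F i) *+ 'C(#|T|.-1, k).
Proof.
move=> F_ge0 sel_in; rewrite -sum_subsets_sum; apply: ler_sum => tau /eqP tau_k.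
by rewrite (bigD1 (sel tau)) ?sel_in //= lerDl sumr_ge0.
Qed.

End SubsetCounting.

Lemma bin_pred_ratio (R : numFieldType) (m k : nat) : (k < m)%N ->
  'C(m.-1, k)%:R / 'C(m, k.+1)%:R = k.+1%:R / m%:R :> R.
Proof.
move=> km; have m_gt0 : (0 < m)%N by apply: leq_ltn_trans km.
apply/eqP; rewrite eqr_div ?pnatr_eq0 -?lt0n ?bin_gt0 //.
by rewrite -!natrM mulnC mul_bin_diag mulnC.
Qed.

Theorem lemma5 (R : realFieldType) (m n : nat) (A : 'M[R]_(m, n)) (b : 'cV[R]_m)
  (beta : nat) (x : 'cV[R]_n) (sel : {set 'I_m} -> 'I_m) :
  (forall i : 'I_m, \sum_(j < n) A i j ^+ 2 = 1) ->
  (1 <= beta <= m)%N ->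
  greedy_selection A b x beta sel ->
  loewner_le (ES_outer A beta sel) ((beta%:R / m%:R) *: (A^T *m A)).
Proof.
move=> _; case: beta => // k /andP[_ km] greedy.
apply: loewner_le_qform => v.
rewrite /ES_outer !qformZ qform_sum qform_gram.
under eq_bigr do rewrite qform_row_gram.
set F := fun i : 'I_m => ((A *m v) i 0) ^+ 2.
have sel_le := @sum_subsets_choice_le _ _ k F sel (fun i => sqr_ge0 _)
  (fun tau tau_k => (greedy tau tau_k).1).
rewrite card_ord in sel_le.
rewrite -bin_pred_ratio // mulrAC [_^-1 * _]mulrC mulr_natl.
by apply: (ler_wpM2r _ sel_le); rewrite invr_ge0 ler0n.
Qed.
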